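(* Let $k\ge 3$ and let $\mathcal{V}$ and $\tilde{\mathcal{V}}$ be two one-parameter arrays (rays) of type $(k,n)$, written in terms of their columns as $\mathcal{V}=[\mathcal{T}^{(1)},\ldots,\mathcal{T}^{(n)}]$ and $\tilde{\mathcal{V}}=[\tilde{\mathcal{T}}^{(1)},\ldots,\tilde{\mathcal{T}}^{(n)}]$. Then $\mathcal{V}$ and $\tilde{\mathcal{V}}$ are compatible if and only if, for every $i=1,\ldots,n$, the columns $\mathcal{T}^{(i)}$ and $\tilde{\mathcal{T}}^{(i)}$ are compatible as rays of type $(k-1,n-1)$ on the label set $\{1,\ldots,n\}\setminus\{i\}$.
   Context: Labels carry the cyclic order $1<\cdots<n$. A planar Feynman diagram on a label set $L$ is a tree with leaves labelled by $L$, internal vertices of degree at least 3, planar for the induced cyclic order, with nonnegative internal edge lengths, giving a tree metric $d_{ab}$. For $2\le k<n$ and a label set $N$ with $|N|=n$, an array of type $(k,n)$ on $N$ assigns to every $(k-2)$-subset $\{i_1,\ldots,i_{k-2}\}\subseteq N$ a planar Feynman diagram $\mathcal{V}_{i_1\ldots i_{k-2}}$ on $N\setminus\{i_1,\ldots,i_{k-2}\}$ with metric $d^{(i_1\ldots i_{k-2})}_{ab}$, such that $\pi_{i_1\ldots i_k}:=d^{(i_1\ldots i_{k-2})}_{i_{k-1}i_k}$ is totally symmetric in all $k$ indices (for $k=2$ an array is a single tree on $N$). Metrics are considered modulo $\pi_{I}\sim\pi_I+\sum_{i\in I}w_i$ for arbitrary reals $w_i$. A one-parameter array (ray) is an array whose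 metric is $\pi=x\,V$ for a fixed tensor $V$ and a single parameter $x>0$. Two rays with tensors $V,W$ of the same type are compatible if for all $x,y>0$ the tensor $xV+yW$ is, up to $\sim$, the metric of an array of that type (diagrams not necessarily cubic). The $i$-th column of an array $\mathcal{V}$ of type $(k,n)$ is the array $\mathcal{T}^{(i)}$ of type $(k-1,n-1)$ on $N\setminus\{i\}$ given by $\mathcal{T}^{(i)}_{i_2\ldots i_{k-2}}:=\mathcal{V}_{i\,i_2\ldots i_{k-2}}$ (for $k=3$ it is the single tree $\mathcal{V}_i$). *)

From HB Require Import structures.
From mathcomp Require Import all_boot all_order all_algebra.
From mathcomp Require Import reals.
Set Implicit Arguments. Unset Strict Implicit. Unset Printing Implicit Defensive.
Import Order.TTheory GRing.Theory Num.Theory.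
Local Open Scope ring_scope.

(* Labels are elements of 'I_m, carrying the (cyclic) order 0 < 1 < ... < m-1
   (a relabelling of 1 < ... < m).  A label set is a  L : {set 'I_m}, with the
   induced cyclic order. *)

Definition cyc_interval (m : nat) (L A : {set 'I_m}) : Prop :=
  exists a b : 'I_m,
    A = [set x in L | (a <= x <= b)%N] \/ A = [set x in L | ~~ (a <= x <= b)%N].

(* Two splits  A | L\A  and  B | L\B  of L are compatible (= can be edges of
   one tree): one of the four "quadrants" is empty. *)
Definition splits_compatible (m : nat) (L A B : {set 'I_m}) : Prop :=
  [|| A :&: B == set0, A \subset B, B \subset A | L \subset A :|: B].

(* A planar Feynman diagram on L, encoded by its split system: every edge of a
   tree with leaf set L (internal vertices of degree >= 3) is determined by the
   split A | L\A of the leaves it induces; the tree is planar for the induced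
   cyclic order iff every such A is a cyclic interval of L; the splits of a tree
   are pairwise compatible, and every pairwise compatible split system comes from
   a unique such tree (Buneman).  'len A' is the length (>= 0) of the internal
   edge with side A (0 if there is no such edge), 'lf a' the length of the leaf
   edge at a (arbitrary real).  The tree metric is the sum of the lengths of the
   edges on the path from a to b, i.e. the edges whose split separates a and b.
   [planar_tree_metric L d] says that d (on distinct a, b in L) is the metric
   of some planar Feynman diagram on L. *)
Definition planar_tree_metric (R : realType) (m : nat) (L : {set 'I_m})
    (d : 'I_m -> 'I_m -> R) : Prop :=
  exists (len : {set 'I_m} -> R) (lf : 'I_m -> R),
    [/\ forall A, len A != 0 -> A \subset L /\ cyc_interval L A,
        forall A, 0 <= len A,
        forall A B, len A != 0 -> len B != 0 -> splits_compatible L A B &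
        forall a b, a \in L -> b \in L -> a != b ->
          d a b = lf a + lf b +
                  \sum_(A : {set 'I_m} | (a \in A) != (b \in A)) len A].

(* An array of type (k, #|N|) on N assigns to every
   (k-2)-subset J of N a planar diagram on N \ J with metric d^(J) such that
   pi_{i_1..i_k} := d^(J)_{i_{k-1} i_k} is totally symmetric, i.e. depends only
   on the k-set {i_1,...,i_k}.  We therefore represent the array by its metric
   pi : {set 'I_m} -> R (only its values on k-subsets of N matter), and
   [is_array k N pi] says that for every (k-2)-subset J of N the function
   (a,b) |-> pi (J ∪ {a,b}) is the metric of a planar Feynman diagram on N\J. *)
Definition is_array (R : realType) (m k : nat) (N : {set 'I_m})
    (pi : {set 'I_m} -> R) : Prop :=
  forall J : {set 'I_m}, J \subset N -> #|J| = (k - 2)%N ->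
    planar_tree_metric (N :\: J) (fun a b => pi (J :|: [set a; b])).

Definition metric_equiv (R : realType) (m k : nat) (N : {set 'I_m})
    (pi pi' : {set 'I_m} -> R) : Prop :=
  exists w : 'I_m -> R, forall I : {set 'I_m}, I \subset N -> #|I| = k ->
    pi' I = pi I + \sum_(i in I) w i.

Definition is_ray (R : realType) (m k : nat) (N : {set 'I_m})
    (V : {set 'I_m} -> R) : Prop :=
  forall x : R, 0 < x -> is_array k N (fun I => x * V I).

Definition rays_compatible (R : realType) (m k : nat) (N : {set 'I_m})
    (V W : {set 'I_m} -> R) : Prop :=
  forall x y : R, 0 < x -> 0 < y ->
    exists pi : {set 'I_m} -> R,
      is_array k N pi /\ metric_equiv k N pi (fun I => x * V I + y * W I).

Definition column (R : realType) (m : nat) (i : 'I_m)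
    (V : {set 'I_m} -> R) : {set 'I_m} -> R :=
  fun I => V (i |: I).

From HB Require Import structures.
From mathcomp Require Import all_boot all_order all_algebra.
From mathcomp Require Import reals.
From mathcomp Require Import zify ring.
Set Implicit Arguments. Unset Strict Implicit. Unset Printing Implicit Defensive.
Import Order.TTheory GRing.Theory Num.Theory.
Local Open Scope ring_scope.

(* Adding [w_i] to every [pi_I] adds [w_a + w_b + sum_(j in J) w_j] to the tree
   metric [d^(J)_ab]; this only changes leaf-edge lengths, so arrays are stable
   under [~] and two rays are compatible exactly when every [x V + y W] is itself
   an array.  For [i \in J] the diagram [V_J] is also the diagram of the [i]-th
   column indexed by [J \ i]; as [k >= 3] makes every [J] nonempty, a tensor is
   an array iff all its columns are. *)

Section TreeMetrics.

Variables (R : realType) (m : nat) (L : {set 'I_m}).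

Lemma planar_tree_metric_shift (d d' : 'I_m -> 'I_m -> R) (g : 'I_m -> R) :
  planar_tree_metric L d ->
  (forall a b, a \in L -> b \in L -> a != b -> d' a b = d a b + g a + g b) ->
  planar_tree_metric L d'.
Proof.
move=> [len [lf [len_split len_ge0 len_compat dE]]] d'E.
exists len, (fun a => lf a + g a); split => // a b aL bL ab.
by rewrite d'E // dE //; ring.
Qed.

Lemma planar_tree_metric_ext (d d' : 'I_m -> 'I_m -> R) :
  planar_tree_metric L d ->
  (forall a b, a \in L -> b \in L -> a != b -> d' a b = d a b) ->
  planar_tree_metric L d'.
Proof.
move=> dP d'E; apply: (planar_tree_metric_shift (g := fun=> 0) dP).
by move=> a b aL bL ab; rewrite d'E // !addr0.
Qed.

End TreeMetrics.

Section Arrays.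

Variables (R : realType) (m : nat) (N : {set 'I_m}).

Lemma is_array_equiv (k : nat) (pi pi' : {set 'I_m} -> R) :
  (2 <= k)%N -> metric_equiv k N pi pi' -> is_array k N pi -> is_array k N pi'.
Proof.
move=> k2 [w pi'E] piA J sJN cardJ.
pose s := \sum_(j in J) w j.
apply: (planar_tree_metric_shift (g := fun a => w a + s / 2%:R) (piA J sJN cardJ)).
move=> a b; rewrite !inE => /andP[aJ aN] /andP[bJ bN] ab.
have bJa : a \notin b |: J by rewrite !inE negb_or ab.
have -> : J :|: [set a; b] = a |: (b |: J).
  by apply/setP => z; rewrite !inE orbC -orbA.
rewrite pi'E; last first.
- by rewrite cardsU1 bJa cardsU1 bJ cardJ; lia.
- by rewrite !subUset !sub1set aN bN sJN.
by rewrite !big_setU1 //= -/s; field.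
Qed.

Variables (k : nat) (pi : {set 'I_m} -> R).
Hypothesis k3 : (3 <= k)%N.

Lemma is_array_column (i : 'I_m) :
  is_array k N pi -> i \in N -> is_array (k - 1) (N :\ i) (column i pi).
Proof.
move=> piA iN J sJ cardJ.
have iJ : i \notin J by apply/negP => /(subsetP sJ); rewrite !inE eqxx.
have sJN : i |: J \subset N by rewrite subUset sub1set iN (subset_trans sJ) ?subD1set.
have := piA (i |: J) sJN; rewrite cardsU1 iJ cardJ => /(_ ltac:(lia)).
rewrite -setDDl => colP; apply: (planar_tree_metric_ext colP) => a b _ _ _.
by rewrite /column setUA.
Qed.

Lemma is_array_of_columns :
  (forall i, i \in N -> is_array (k - 1) (N :\ i) (column i pi)) ->
  is_array k N pi.
Proof.
move=> colA J sJN cardJ.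
have [i iJ] : exists i, i \in J by apply/card_gt0P; lia.
have sJi : J :\ i \subset N :\ i by apply: setSD.
have cardJi : #|J :\ i| = (k - 1 - 2)%N.
  by move: (cardsD1 i J); rewrite iJ cardJ; lia.
have := colA i (subsetP sJN i iJ) _ sJi cardJi.
have -> : N :\ i :\: (J :\ i) = N :\: J.
  by apply/setP => z; rewrite !inE; case: eqVneq => [->|]; rewrite ?iJ.
move=> colP; apply: (planar_tree_metric_ext colP) => a b _ _ _.
by rewrite /column [in RHS]setUA setD1K.
Qed.

End Arrays.

Lemma rays_compatibleE (R : realType) (m k : nat) (N : {set 'I_m})
    (V W : {set 'I_m} -> R) :
  (2 <= k)%N ->
  rays_compatible k N V W <->
  forall x y : R, 0 < x -> 0 < y -> is_array k N (fun I => x * V I + y * W I).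
Proof.
move=> k2; split => [compat x y x0 y0 | combA x y x0 y0].
- have [pi [piA equiv]] := compat x y x0 y0.
  exact: is_array_equiv equiv piA.
- exists (fun I => x * V I + y * W I); split; first exact: combA.
  by exists (fun=> 0) => I _ _; rewrite big1 // addr0.
Qed.

Theorem theorem2p3 (R : realType) (n k : nat) :
  (3 <= k)%N -> (k < n)%N ->
  forall V W : {set 'I_n} -> R,
    is_ray k [set: 'I_n] V -> is_ray k [set: 'I_n] W ->
    (rays_compatible k [set: 'I_n] V W <->
     forall i : 'I_n,
       rays_compatible (k - 1) ([set: 'I_n] :\ i) (column i V) (column i W)).
Proof.
move=> k3 _ V W _ _.
have k2 : (2 <= k - 1)%N by lia.
split => [/(rays_compatibleE _ _ _ (ltnW k3)) combA i | colCompat].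
- apply/(rays_compatibleE _ _ _ k2) => x y x0 y0.
  by have := is_array_column k3 (combA x y x0 y0) (in_setT i).
- apply/(rays_compatibleE _ _ _ (ltnW k3)) => x y x0 y0.
  apply: is_array_of_columns => // i _.
  exact: (rays_compatibleE _ _ _ k2).1 (colCompat i) x y x0 y0.
Qed.
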